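(* Let $a$ be a positive integer with $\sigma(a)\neq 2a$, and let $b,c$ be coprime integers with $c>0$ and $\dfrac{b}{c}=\dfrac{a}{2a-\sigma(a)}$. Let $\alpha,\beta,x,y$ be positive integers and put $$p=\alpha x-1,\quad q=\beta y-1,\quad r=\beta x-1,\quad s=\alpha y-1.$$ Suppose $p,q,r,s$ are primes with $p\neq q$, $r\neq s$, none of which divides $a$. If $$\bigl(c\alpha\beta x-b(\alpha+\beta)\bigr)\bigl(c\alpha\beta y-b(\alpha+\beta)\bigr)=b^2(\alpha+\beta)^2-2bc\alpha\beta,$$ then $apq$ and $ars$ are amicable numbers.
   Context: For a positive integer $N$, $\sigma(N)$ denotes the sum of all positive divisors of $N$. Positive integers $M,N$ are amicable if $\sigma(M)-M=N$ and $\sigma(N)-N=M$. *)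

From mathcomp Require Import all_boot all_order all_algebra.
Set Implicit Arguments. Unset Strict Implicit. Unset Printing Implicit Defensive.

Definition sigma (N : nat) : nat := \sum_(d <- divisors N) d.

Definition amicable (M N : nat) : Prop :=
  0 < M /\ 0 < N /\ sigma M - M = N /\ sigma N - N = M.

From mathcomp Require Import all_boot all_order all_algebra.
From mathcomp Require Import ring.
Import GRing.Theory Num.Theory.

Set Implicit Arguments.
Unset Strict Implicit.
Unset Printing Implicit Defensive.

(* Since p, q do not divide a, σ(apq) = σ(a)(p+1)(q+1), and likewise for ars; as
   (p+1)(q+1) = αβxy = (r+1)(s+1), amicability reduces to the single equation
   σ(a)·αβxy = a(pq + rs), i.e. (2a - σ(a))·αβxy = a((α+β)(x+y) - 2).  The
   hypothesis factors as cαβ·(cαβxy - b(α+β)(x+y) + 2b) = 0, so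
   c·αβxy = b((α+β)(x+y) - 2), and multiplying by b(2a - σ(a)) = ac gives that
   equation after cancelling c. *)

Lemma perm_divisors_mul_prime m p : prime p -> ~~ (p %| m) ->
  perm_eq (divisors (m * p)) (divisors m ++ map (muln p) (divisors m)).
Proof.
move=> p_pr p_ndvd_m; have p_gt0 := prime_gt0 p_pr.
have m_gt0 : 0 < m by rewrite lt0n; apply: contraNneq p_ndvd_m => ->.
have mulp_inj : injective (muln p) by move=> u v /eqP; rewrite eqn_pmul2l // => /eqP.
apply: uniq_perm; first exact: divisors_uniq.
- rewrite cat_uniq (map_inj_uniq mulp_inj) divisors_uniq /= andbT.
  apply/hasPn => _ /mapP[d _ ->]; rewrite -dvdn_divisors //.
  by apply: contra p_ndvd_m; apply: dvdn_trans; apply: dvdn_mulr.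
move=> d; rewrite mem_cat -!dvdn_divisors ?muln_gt0 ?m_gt0 //.
apply/idP/orP => [d_dvd | [d_dvd | /mapP[e e_div ->]]].
- have [p_dvd_d | p_ndvd_d] := boolP (p %| d).
    right; apply/mapP; exists (d %/ p); last by rewrite mulnC divnK.
    by rewrite -dvdn_divisors // -(dvdn_pmul2r p_gt0) divnK.
  by left; rewrite -(@Gauss_dvdl _ _ p) // coprime_sym prime_coprime.
- exact: dvdn_mulr.
- by rewrite mulnC dvdn_pmul2r // dvdn_divisors.
Qed.

Lemma sigma_mul_prime m p : prime p -> ~~ (p %| m) ->
  sigma (m * p) = sigma m * p.+1.
Proof.
move=> p_pr p_ndvd_m.
rewrite /sigma (perm_big _ (perm_divisors_mul_prime p_pr p_ndvd_m)).
by rewrite big_cat big_map -big_distrr /= mulnSr addnC mulnC.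
Qed.

Lemma sigma_mul_prime2 a p q : prime p -> prime q -> p != q ->
  ~~ (p %| a) -> ~~ (q %| a) -> sigma (a * p * q) = sigma a * (p.+1 * q.+1).
Proof.
move=> p_pr q_pr p_neq_q p_ndvd q_ndvd.
have q_ndvd_ap : ~~ (q %| a * p).
  by rewrite Euclid_dvdM // negb_or q_ndvd dvdn_prime2 // eq_sym.
by rewrite sigma_mul_prime // sigma_mul_prime // mulnA.
Qed.

Lemma amicable_of_sigma M N : 0 < M -> 0 < N ->
  sigma M = M + N -> sigma N = M + N -> amicable M N.
Proof. by move=> M_gt0 N_gt0 sM sN; rewrite /amicable sM sN addKn addnK. Qed.

Lemma amicable_mul_primes a p q r s :
  prime p -> prime q -> prime r -> prime s -> p != q -> r != s ->
  ~~ (p %| a) -> ~~ (q %| a) -> ~~ (r %| a) -> ~~ (s %| a) ->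
  p.+1 * q.+1 = r.+1 * s.+1 ->
  sigma a * (p.+1 * q.+1) = a * (p * q + r * s) ->
  amicable (a * p * q) (a * r * s).
Proof.
move=> p_pr q_pr r_pr s_pr p_neq_q r_neq_s p_ndvd q_ndvd r_ndvd s_ndvd
  eq_pq_rs sigma_eq.
have a_gt0 : 0 < a by rewrite lt0n; apply: contraNneq p_ndvd => ->.
apply: amicable_of_sigma; rewrite ?muln_gt0 ?a_gt0 ?prime_gt0 //.
  by rewrite sigma_mul_prime2 // sigma_eq mulnDr !mulnA.
by rewrite sigma_mul_prime2 // -eq_pq_rs sigma_eq mulnDr !mulnA.
Qed.

Lemma amicable_of_balance a alpha beta x y p q r s :
  alpha * x = p.+1 -> beta * y = q.+1 -> beta * x = r.+1 -> alpha * y = s.+1 ->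
  prime p -> prime q -> prime r -> prime s -> p != q -> r != s ->
  ~~ (p %| a) -> ~~ (q %| a) -> ~~ (r %| a) -> ~~ (s %| a) ->
  2 * a * (alpha * beta * x * y) + 2 * a
    = sigma a * (alpha * beta * x * y) + a * ((alpha + beta) * (x + y)) ->
  amicable (a * p * q) (a * r * s).
Proof.
move=> px qy rx sy p_pr q_pr r_pr s_pr p_neq_q r_neq_s p_ndvd q_ndvd r_ndvd s_ndvd.
have -> : alpha * beta * x * y = p.+1 * q.+1 by rewrite -px -qy; ring.
have -> : (alpha + beta) * (x + y) = p.+1 + q.+1 + r.+1 + s.+1.
  by rewrite -px -qy -rx -sy; ring.
have eq_pq_rs : p.+1 * q.+1 = r.+1 * s.+1 by rewrite -px -qy -rx -sy; ring.
have pq_rs_sum :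
    p * q + r * s + (p.+1 + q.+1 + r.+1 + s.+1) = 2 * (p.+1 * q.+1) + 2.
  by rewrite [in RHS]mul2n -addnn {2}eq_pq_rs; ring.
move=> balance; apply: amicable_mul_primes => //.
apply/eqP; rewrite -(eqn_add2r (a * (p.+1 + q.+1 + r.+1 + s.+1))) -mulnDr pq_rs_sum.
by rewrite -balance; apply/eqP; ring.
Qed.

Local Open Scope ring_scope.

Lemma linear_of_quadratic_condition (R : idomainType) (b c u v x y : R) :
  c * u != 0 ->
  (c * u * x - b * v) * (c * u * y - b * v) = b ^+ 2 * v ^+ 2 - 2 * b * c * u ->
  c * (u * x * y) = b * (v * (x + y) - 2).
Proof.
move=> cu_neq0 quad.
have : c * u * (c * (u * x * y) - b * (v * (x + y) - 2)) = 0.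
  by rewrite -(subrr (b ^+ 2 * v ^+ 2 - 2 * b * c * u)) -{1}quad; ring.
by move/eqP; rewrite mulf_eq0 (negbTE cu_neq0) subr_eq0 => /eqP.
Qed.

Lemma cross_mul_of_ratio (b c n d : int) : c != 0 -> d != 0 ->
  (b%:~R / c%:~R : rat) = n%:~R / d%:~R -> b * d = n * c.
Proof.
move=> c_neq0 d_neq0 /eqP; rewrite eqr_div ?intr_eq0 // => /eqP cross.
by apply: (@intr_inj rat); rewrite !rmorphM.
Qed.

Lemma balance_of_quadratic_condition (a : nat) (b c : int) (alpha beta x y : nat) :
  sigma a <> (2 * a)%N -> 0 < c ->
  (b%:~R / c%:~R : rat) = a%:R / ((2 * a)%:R - (sigma a)%:R) ->
  (0 < alpha)%N -> (0 < beta)%N ->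
  (c * (alpha * beta * x)%:R - b * (alpha + beta)%:R) *
  (c * (alpha * beta * y)%:R - b * (alpha + beta)%:R)
    = b ^+ 2 * ((alpha + beta)%:R) ^+ 2 - 2 * b * c * (alpha * beta)%:R ->
  (2 * a * (alpha * beta * x * y) + 2 * a
    = sigma a * (alpha * beta * x * y) + a * ((alpha + beta) * (x + y)))%N.
Proof.
move=> sigma_neq c_gt0 ratio alpha_gt0 beta_gt0 quad.
set d : int := (2 * a)%:R - (sigma a)%:R.
have d_neq0 : d != 0 by rewrite subr_eq0 eqr_nat; apply/eqP => /esym.
have c_neq0 : c != 0 := lt0r_neq0 c_gt0.
have bd : b * d = a%:R * c.
  by apply: cross_mul_of_ratio => //; rewrite ratio rmorphB /= !rmorph_nat.
have cX : c * ((alpha * beta)%:R * x%:R * y%:R)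
          = b * ((alpha + beta)%:R * (x%:R + y%:R) - 2).
  apply: linear_of_quadratic_condition.
    by rewrite mulf_neq0 // pnatr_eq0 -lt0n muln_gt0 alpha_gt0.
  by move: quad; rewrite [(_ * x)%:R]natrM [(_ * y)%:R]natrM !mulrA.
have dX : d * ((alpha * beta)%:R * x%:R * y%:R)
          = a%:R * ((alpha + beta)%:R * (x%:R + y%:R) - 2).
  apply: (mulfI c_neq0).
  transitivity (b * d * ((alpha + beta)%:R * (x%:R + y%:R) - 2)).
    by rewrite mulrCA cX; ring.
  by rewrite bd; ring.
apply/eqP; rewrite -(eqr_nat int) -subr_eq0 !natrD !natrM; apply/eqP.
transitivity (d * ((alpha * beta)%:R * x%:R * y%:R)
  - a%:R * ((alpha + beta)%:R * (x%:R + y%:R) - 2)).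
  rewrite /d !natrM !natrD; ring.
by rewrite dX subrr.
Qed.

Theorem mainTheorem8 (a : nat) (b c : int) (alpha beta x y : nat) :
  (0 < a)%N ->
  sigma a <> (2 * a)%N ->
  coprimez b c ->
  0 < c ->
  (b%:~R / c%:~R : rat) = (a%:R / ((2 * a)%:R - (sigma a)%:R)) ->
  (0 < alpha)%N -> (0 < beta)%N -> (0 < x)%N -> (0 < y)%N ->
  let p := (alpha * x - 1)%N in
  let q := (beta * y - 1)%N in
  let r := (beta * x - 1)%N in
  let s := (alpha * y - 1)%N in
  prime p -> prime q -> prime r -> prime s ->
  p <> q -> r <> s ->
  ~~ (p %| a)%N -> ~~ (q %| a)%N -> ~~ (r %| a)%N -> ~~ (s %| a)%N ->
  (c * (alpha * beta * x)%:R - b * (alpha + beta)%:R) *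
  (c * (alpha * beta * y)%:R - b * (alpha + beta)%:R)
    = b ^+ 2 * ((alpha + beta)%:R) ^+ 2 - 2 * b * c * (alpha * beta)%:R ->
  amicable (a * p * q) (a * r * s).
Proof.
move=> _ sigma_neq _ c_gt0 ratio alpha_gt0 beta_gt0 _ _ p q r s
  p_pr q_pr r_pr s_pr p_neq_q r_neq_s p_ndvd q_ndvd r_ndvd s_ndvd quad.
have succ_pred m : prime (m - 1)%N -> m = (m - 1)%N.+1 by rewrite subn1; case: m.
apply: (amicable_of_balance (succ_pred _ p_pr) (succ_pred _ q_pr)
          (succ_pred _ r_pr) (succ_pred _ s_pr)) => //; [exact/eqP.. |].
exact: balance_of_quadratic_condition sigma_neq c_gt0 ratio alpha_gt0 beta_gt0 quad.
Qed.
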